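(* Let $d\ge5$ and $k=k_0(d)$, where $k_0(d)=(d+1)/2$ if $d$ is odd and $k_0(d)=d/2+1$ if $d$ is even. Then for every $x>1$, $$\frac{(x+1)f'(x)}{k}<\big(1+\eta(x)\big)f(x).$$
   Context: $f(x)=\binom dk^{-1}\sum_{i=0}^{d-k}\binom ki\binom{d-k}{i}x^{k-i}$ and $\eta(x)=\dfrac{2k-d}{d-k+\sqrt{(d-k)^2+d(2k-d)f(x)}}$. *)

From mathcomp Require Import all_boot all_order all_algebra.
Set Implicit Arguments. Unset Strict Implicit. Unset Printing Implicit Defensive.
Import Order.TTheory GRing.Theory Num.Theory.
Local Open Scope ring_scope.

Definition k0 (d : nat) : nat := if odd d then (d.+1)./2 else (d./2).+1.

Definition fpoly (R : fieldType) (d k : nat) : {poly R} :=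
  ('C(d, k)%:R)^-1 *:
    \sum_(i < (d - k).+1) ('C(k, i) * 'C(d - k, i))%:R *: 'X^(k - i).

Definition eta (R : rcfType) (d k : nat) (x : R) : R :=
  (2 * k%:R - d%:R) /
    (d%:R - k%:R
     + Num.sqrt ((d%:R - k%:R) ^+ 2 + d%:R * (2 * k%:R - d%:R) * (fpoly R d k).[x])).

From mathcomp Require Import all_boot all_order all_algebra.
From mathcomp Require Import zify ring lra.
Set Implicit Arguments. Unset Strict Implicit. Unset Printing Implicit Defensive.
Import Order.TTheory GRing.Theory Num.Theory.

(* Write d = k + m, so that c := 2k - d is 1 or 2 and m >= 1, and shift to
   y = x - 1.  The Taylor coefficients a_j = C(k,j) C(d-j,m) / C(d,k) of f at 1
   are nonnegative and satisfy (d - j)(j + 1) a_(j+1) = (k - j)^2 a_j; since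
   k <= m + 2, the same recurrence makes the coefficients of
   h(y) := (y + 2) f'(1 + y) - k f(1 + y) nonpositive from degree 2 on.  So f is
   bounded below by its quadratic Taylor polynomial at 1 and h = (x + 1) f'(x) - k f(x)
   above by its linear one.  The claim amounts to d h < k (sqrt(m^2 + d c f) - m),
   i.e. to d h^2 + 2 k m h < k^2 c f when h > 0, and with the two bounds inserted
   this becomes a polynomial inequality in y whose constant terms cancel. *)

Lemma bin_swap k i j : 'C(k, i) * 'C(k - i, j) = 'C(k, j) * 'C(k - j, i).
Proof.
have [hij | hij] := leqP (i + j) k; last first.
  have zero a b : k < a + b -> 'C(k, a) * 'C(k - a, b) = 0.
    move=> hab; have [ha | ha] := leqP a k; last by rewrite bin_small.
    by rewrite (@bin_small (k - a)) ?muln0 //; lia.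
  by rewrite !zero // addnC.
have fact_gt0 : 0 < i`! * j`! * (k - i - j)`! by rewrite !muln_gt0 !fact_gt0.
apply/eqP; rewrite -(eqn_pmul2r fact_gt0); apply/eqP.
have expand a b : a + b <= k ->
    'C(k, a) * 'C(k - a, b) * (a`! * b`! * (k - a - b)`!) = k`!.
  move=> hab; rewrite -(@bin_fact k a) ?(leq_trans (leq_addr b a)) //.
  rewrite -(@bin_fact (k - a) b); last lia.
  ring.
rewrite expand // (mulnC i`!) (_ : k - i - j = k - j - i); last lia.
by rewrite expand // addnC.
Qed.

Lemma sum_bin_shift k m j :
  \sum_(i < m.+1) 'C(k, i) * 'C(m, i) * 'C(k - i, j) = 'C(k, j) * 'C(k + m - j, m).
Proof.
transitivity ('C(k, j) * \sum_(i < m.+1) 'C(k - j, i) * 'C(m, m - i)).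
  rewrite big_distrr; apply: eq_bigr => i _ /=.
  by rewrite bin_sub -1?ltnS // mulnAC bin_swap mulnA.
rewrite binomial.Vandermonde.
have [hj | hj] := leqP j k; last by rewrite bin_small.
by congr (_ * 'C(_, _)); lia.
Qed.

(* C(k + m, k) times the j-th Taylor coefficient of fpoly (k + m) k at 1. *)
Definition shift_coef k m j := 'C(k, j) * 'C(k + m - j, m).

Lemma shift_coef0 k m : shift_coef k m 0 = 'C(k + m, k).
Proof.
by rewrite /shift_coef bin0 mul1n subn0 -[X in 'C(_, X) = _](addKn k m) bin_sub ?leq_addr.
Qed.

Lemma shift_coef_rec k m j :
  (k + m - j) * (j.+1 * shift_coef k m j.+1) = (k - j) ^ 2 * shift_coef k m j.
Proof.
rewrite /shift_coef; have [jk | kj] := ltnP j k; last first.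
  rewrite (@bin_small k j.+1) ?ltnS // (_ : k - j = 0); last lia.
  by rewrite !(mul0n, muln0).
have down := mul_bin_down (k + m - j) m.
rewrite (_ : (k + m - j).-1 = k + m - j.+1) in down; last lia.
rewrite (_ : k + m - j - m = k - j) in down; last lia.
rewrite [LHS](_ : _ = j.+1 * 'C(k, j.+1) * ((k + m - j) * 'C(k + m - j.+1, m))); last ring.
by rewrite mul_bin_left down; ring.
Qed.

Lemma shift_coef_deriv_leq k m i : k <= m + i ->
  i * shift_coef k m i + 2 * (i.+1 * shift_coef k m i.+1) <= k * shift_coef k m i.
Proof.
move=> hkmi; have [hik | hki] := ltnP i k; last first.
  rewrite {2}/shift_coef (@bin_small k i.+1) ?ltnS // !muln0 addn0.
  have [/bin_small a0 | ik] := ltnP k i; first by rewrite /shift_coef a0 !(mul0n, muln0).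
  by rewrite (_ : i = k) //; lia.
have pos : 0 < k + m - i by lia.
rewrite -(leq_pmul2l pos) mulnDr [_ * (2 * _)]mulnCA shift_coef_rec.
set a := shift_coef k m i.
nia.
Qed.

Lemma k0_decomp d : 3 <= d ->
  exists m c, [/\ 0 < m, 1 <= c <= 2, k0 d = m + c & d = k0 d + m].
Proof.
rewrite /k0 => d_ge3; have := odd_double_half d.
by case: (odd d) => /= dE; [exists d./2, 1 | exists d./2.-1, 2]; split; lia.
Qed.

Local Open Scope ring_scope.

Lemma coef_XaddC1n (R : nzRingType) n j : ((('X + 1) : {poly R}) ^+ n)`_j = 'C(n, j)%:R.
Proof.
rewrite exprD1n coef_sum.
transitivity (\sum_(i < n.+1 | i == j :> nat) 'C(n, i)%:R : R).
  rewrite [RHS]big_mkcond; apply: eq_bigr => i _.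
  by rewrite coefMn coefXn eq_sym; case: (_ == _); rewrite ?mul0rn.
by rewrite (big_ord1_eq _ (fun i => 'C(n, i)%:R)); case: ltnP => // /bin_small ->.
Qed.

Lemma coef_fpoly_shift (R : fieldType) k m j :
  (fpoly R (k + m) k \Po ('X + 1))`_j = (shift_coef k m j)%:R / 'C(k + m, k)%:R.
Proof.
rewrite /fpoly addKn comp_polyZ coefZ mulrC raddf_sum coef_sum /=; congr (_ * _).
under eq_bigr => i _ do rewrite comp_polyZ comp_Xn_poly coefZ coef_XaddC1n -natrM.
by rewrite -natr_sum sum_bin_shift.
Qed.

Lemma coef_XaddC_deriv (R : nzRingType) (p : {poly R}) (a : R) i :
  (('X + a%:P) * p^`())`_i = p`_i *+ i + a * (p`_i.+1 *+ i.+1).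
Proof. by rewrite mulrDl coefD coefXM coefCM !coef_deriv; case: i. Qed.

Section HornerBounds.
Variables (R : numDomainType) (p : {poly R}) (y : R).
Hypothesis y_ge0 : 0 <= y.

Lemma horner_ge_quadratic : (forall i, 0 <= p`_i) ->
  p`_0 + p`_1 * y + p`_2 * y ^+ 2 <= p.[y].
Proof.
move=> p_ge0; rewrite (@horner_coef_wide _ (size p).+3) ?leqW //.
rewrite !big_ord_recl /= expr0 mulr1 expr1 !addrA lerDl.
by apply: sumr_ge0 => i _; rewrite mulr_ge0 ?exprn_ge0.
Qed.

Lemma horner_le_linear : (forall i, (2 <= i)%N -> p`_i <= 0) ->
  p.[y] <= p`_0 + p`_1 * y.
Proof.
move=> p_le0; rewrite (@horner_coef_wide _ (size p).+2) ?leqW //.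
rewrite !big_ord_recl /= expr0 mulr1 expr1 addrA gerDl.
by apply: sumr_le0 => i _; rewrite mulr_le0_ge0 ?p_le0 ?exprn_ge0.
Qed.

End HornerBounds.

Section ShiftedFpoly.
Variables (R : numFieldType) (k m : nat).
Local Notation P := (fpoly R (k + m) k \Po ('X + 1)).
Local Notation N := ('C(k + m, k)%:R : R).

Lemma natr_bin_gt0 : 0 < N.
Proof. by rewrite ltr0n bin_gt0 leq_addr. Qed.

Lemma shifted_coef0 : P`_0 = 1.
Proof. by rewrite coef_fpoly_shift shift_coef0 divff // lt0r_neq0 // natr_bin_gt0. Qed.

Lemma shifted_coef_ge0 j : 0 <= P`_j.
Proof. by rewrite coef_fpoly_shift divr_ge0 // ltW // natr_bin_gt0. Qed.

Lemma shifted_coef_rec j :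
  (k + m - j)%N%:R * (j.+1%:R * P`_j.+1) = ((k - j) ^ 2)%N%:R * P`_j.
Proof.
by rewrite !coef_fpoly_shift !mulrA -!natrM -(mulnA (k + m - j)%N) shift_coef_rec.
Qed.

Lemma shifted_deriv_coef_le0 i : (k <= m + i)%N ->
  (('X + 2%:P) * P^`() - k%:R *: P)`_i <= 0.
Proof.
move=> kmi; rewrite coefB coef_XaddC_deriv coefZ !coef_fpoly_shift subr_le0.
rewrite -!mulrnAl !mulrA -mulrDl ler_pM2r ?invr_gt0 ?natr_bin_gt0 //.
rewrite -!mulrnA -natrM -natrD -natrM ler_nat.
rewrite [(shift_coef k m i * i)%N]mulnC [(shift_coef k m i.+1 * _)%N]mulnC.
exact: shift_coef_deriv_leq.
Qed.

Lemma shifted_coef1 : (k + m)%N%:R * P`_1 = k%:R ^+ 2.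
Proof.
by have := shifted_coef_rec 0; rewrite !subn0 mul1r shifted_coef0 mulr1 natrX.
Qed.

Lemma shifted_coef2 : (0 < k)%N ->
  ((k + m)%N%:R - 1) * (2 * P`_2) = (k%:R - 1) ^+ 2 * P`_1.
Proof.
move=> k_gt0; have := shifted_coef_rec 1.
by rewrite natrX !natrB ?(leq_trans k_gt0 (leq_addr m k)).
Qed.

Lemma shifted_fpoly_lb y : 0 <= y -> 1 + P`_1 * y + P`_2 * y ^+ 2 <= P.[y].
Proof.
move=> y_ge0; rewrite -{1}shifted_coef0.
exact: horner_ge_quadratic y_ge0 shifted_coef_ge0.
Qed.

Lemma shifted_fpoly_ub y : (k <= m + 2)%N -> 0 <= y ->
  (y + 2) * (P^`()).[y] - k%:R * P.[y]
    <= 2 * P`_1 - k%:R + (P`_1 + 4 * P`_2 - k%:R * P`_1) * y.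
Proof.
move=> kmi y_ge0.
have := horner_le_linear y_ge0 (fun i (i_ge2 : (2 <= i)%N) =>
  shifted_deriv_coef_le0 (leq_trans kmi (leq_add (leqnn m) i_ge2))).
rewrite hornerD hornerN hornerM hornerD hornerX hornerC hornerZ.
rewrite !coefB !coef_XaddC_deriv !coefZ shifted_coef0.
by rewrite mulr0n mulr1n add0r mulr1 mulrnAr -mulrnAl -mulrnA.
Qed.

End ShiftedFpoly.

Lemma eta_criterion (R : rcfType) (m c k d F E U : R) :
  0 < m -> 0 < c -> k = m + c -> d = m + k -> 0 < F ->
  E - k * F <= U -> d * U ^+ 2 + 2 * k * m * U < k ^+ 2 * c * F ->
  E / k < (1 + c / (m + Num.sqrt (m ^+ 2 + d * c * F))) * F.
Proof.
move=> m_gt0 c_gt0 k_def d_def F_gt0 EU UF.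
have k_gt0 : 0 < k by lra.
have d_gt0 : 0 < d by lra.
set S := Num.sqrt _.
have S_ge0 : 0 <= S := sqrtr_ge0 _.
have S2 : S ^+ 2 = m ^+ 2 + d * c * F.
  by rewrite sqr_sqrtr // addr_ge0 ?sqr_ge0 // !mulr_ge0 //; lra.
have dU_lt : d * U + k * m < k * S.
  have kS_ge0 : 0 <= k * S by rewrite mulr_ge0 //; lra.
  have [/lt_le_trans -> // | dU_ge0] := ltrP (d * U + k * m) 0.
  rewrite -(@ltr_pXn2r _ 2) ?nnegrE // exprMn S2; nra.
have -> : (1 + c / (m + S)) * F = F + (S - m) / d.
  rewrite mulrDl mul1r mulrAC; congr (_ + _).
  apply/eqP; rewrite eqr_div ?lt0r_neq0 //; last lra.
  apply/eqP; rewrite (_ : (S - m) * (m + S) = S ^+ 2 - m ^+ 2); last ring.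
  by rewrite S2; ring.
have -> : E / k = F + (E - k * F) / k by field; lra.
rewrite ltrD2l ltr_pdivrMr // mulrAC ltr_pdivlMr //; nra.
Qed.

Lemma taylor_quadratic_lt (R : rcfType) (m c k d a1 a2 y U : R) :
  0 < m -> 1 <= c <= 2 -> k = m + c -> d = m + k ->
  a1 = k ^+ 2 / d -> a2 = (k - 1) ^+ 2 * a1 / (2 * (d - 1)) -> 0 < y ->
  U = 2 * a1 - k + (a1 + 4 * a2 - k * a1) * y ->
  d * U ^+ 2 + 2 * k * m * U < k ^+ 2 * c * (1 + a1 * y + a2 * y ^+ 2).
Proof.
move=> m_gt0 /andP[c_ge1 c_le2] -> -> -> -> y_gt0 ->; rewrite -subr_gt0.
have d_gt0 : 0 < 2 * m + c by lra.
have d1_gt0 : 0 < 2 * m + c - 1 by lra.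
have c12 : 0 <= (c - 1) * (2 - c) by rewrite mulr_ge0 // subr_ge0.
have mc_gt0 : 0 < m * c by rewrite mulr_gt0 //; lra.
rewrite (_ : _ - _ = (m + c) ^+ 2 * ((m + c) ^+ 2 / (2 * m + c)) * y *
  ((2 * m + (c - 1) * (2 - c)) / (2 * m + c - 1) +
   (m + c - 1) ^+ 2 * (2 * m * c + (c - 1) * (2 - c)) / (2 * (2 * m + c - 1) ^+ 2) * y)).
  apply: mulr_gt0; first by rewrite !(mulr_gt0, invr_gt0, exprn_gt0) //; lra.
  by apply: addr_gt0; rewrite !(mulr_gt0, invr_gt0, exprn_gt0) //; lra.
rewrite (_ : m + (m + c) = 2 * m + c); last ring.
field; lra.
Qed.

Lemma eta_bound (R : rcfType) (m c k d a1 a2 y F E : R) :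
  0 < m -> 1 <= c <= 2 -> k = m + c -> d = m + k ->
  a1 = k ^+ 2 / d -> a2 = (k - 1) ^+ 2 * a1 / (2 * (d - 1)) -> 0 < y ->
  1 + a1 * y + a2 * y ^+ 2 <= F ->
  E - k * F <= 2 * a1 - k + (a1 + 4 * a2 - k * a1) * y ->
  E / k < (1 + c / (m + Num.sqrt (m ^+ 2 + d * c * F))) * F.
Proof.
move=> m_gt0 c12 k_def d_def a1_def a2_def y_gt0 F_ge EU.
have a1_gt0 : 0 < a1 by rewrite a1_def divr_gt0 ?exprn_gt0 //; lra.
have a2_ge0 : 0 <= a2 by rewrite a2_def !mulr_ge0 ?sqr_ge0 ?invr_ge0 //; lra.
have F_gt0 : 0 < F.
  have := mulr_gt0 a1_gt0 y_gt0; have := mulr_ge0 a2_ge0 (sqr_ge0 y); lra.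
apply: eta_criterion EU _ => //; first by case/andP: c12 => ? _; lra.
apply: lt_le_trans (taylor_quadratic_lt m_gt0 c12 k_def d_def a1_def a2_def y_gt0 erefl) _.
by rewrite ler_wpM2l // mulr_ge0 ?sqr_ge0 //; case/andP: c12 => ? _; lra.
Qed.

Theorem lemma15 (R : rcfType) (d : nat) (hd : (5 <= d)%N) (x : R) (hx : 1 < x) :
  (x + 1) * ((fpoly R d (k0 d))^`()).[x] / (k0 d)%:R
    < (1 + eta d (k0 d) x) * (fpoly R d (k0 d)).[x].
Proof.
have [m [c [m_gt0 c12 kE dE]]] := k0_decomp (leq_trans (isT : (3 <= 5)%N) hd).
move: (k0 d) kE dE => k kE dE; subst d.
set y := x - 1; have y_gt0 : 0 < y by rewrite subr_gt0.
have xE : x = y + 1 by rewrite subrK.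
set P := fpoly R (k + m) k \Po ('X + 1).
have fE : (fpoly R (k + m) k).[x] = P.[y] by rewrite horner_comp !hornerE -xE.
have f'E : ((fpoly R (k + m) k)^`()).[x] = (P^`()).[y].
  by rewrite deriv_comp derivD derivX derivC addr0 mulr1 horner_comp !hornerE -xE.
have dk : (k + m)%N%:R - k%:R = m%:R :> R by rewrite natrD addrAC subrr add0r.
have ck : 2 * k%:R - (k + m)%N%:R = c%:R :> R by rewrite natrD kE natrD; ring.
have d_ge2 : 2 <= (k + m)%N%:R :> R by rewrite (ler_nat R 2); lia.
rewrite /eta fE f'E dk ck.
apply: (@eta_bound _ m%:R c%:R k%:R (k + m)%N%:R P`_1 P`_2 y).
- by rewrite ltr0n.
- by rewrite (ler_nat R 1 c) (ler_nat R c 2).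
- by rewrite kE natrD.
- by rewrite natrD addrC.
- by rewrite -(shifted_coef1 R k m) mulrC mulKf // lt0r_neq0 //; lra.
- rewrite -(shifted_coef2 R m (_ : 0 < k)%N); last lia.
  by field; lra.
- exact: y_gt0.
- exact: shifted_fpoly_lb (ltW y_gt0).
- rewrite xE -addrA; apply: shifted_fpoly_ub (ltW y_gt0); lia.
Qed.
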